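(* For all integers $k,r\geq2$ and every real $x\geq r(k-1)$, $$\frac{e^{-x}x^{k-1}}{f_{k-1}(x)\,(k-2)!}<\frac{1}{r-1}.$$
   Context: $f_t(x)=e^{-x}\sum_{i\geq t}x^i/i!$. *)

From Stdlib Require Import Reals.
From Coquelicot Require Import Coquelicot.
Open Scope R_scope.

(* f_t(x) = e^{-x} * sum_{i >= t} x^i / i!   (series reindexed i = n + t) *)
Definition f_tail (t : nat) (x : R) : R :=
  exp (- x) * Series (fun n : nat => x ^ (n + t) / INR (Factorial.fact (n + t))).

(** The terms [x^n / n!] of the exponential series do not decrease while [n <= x].
    Put [m = k - 1]. If [x >= r m], the [(r-1) m + 1] terms of indices [m, ..., r m]
    all dominate [x^m / m!], so the tail [sum_{n >= m} x^n / n! = e^x f_m(x)]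
    exceeds [(r-1) m x^m / m! = (r-1) x^m / (m-1)!]. *)

From Stdlib Require Import Reals Lra Lia.
From Coquelicot Require Import Coquelicot.
Open Scope R_scope.

Lemma Series_ge_sum_f_R0 (a : nat -> R) (N : nat) :
  (forall n, 0 <= a n) -> ex_series a -> sum_f_R0 a N <= Series a.
Proof.
  intros Ha Hex.
  rewrite (Series_incr_n a (S N)) by (lia || exact Hex); simpl pred.
  assert (Htail : 0 <= Series (fun n => a (S N + n)%nat)).
  { rewrite <- (Rmult_0_l (Series (fun n => a (S N + n)%nat))), <- Series_scal_l.
    apply Series_le.
    - intro n; rewrite Rmult_0_l; split; [lra | apply Ha].
    - apply (ex_series_incr_n a (S N)), Hex. }
  lra.
Qed.

Definition exp_tail_term (t : nat) (x : R) (n : nat) : R :=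
  x ^ (n + t) / INR (Factorial.fact (n + t)).

Lemma f_tail_Series (t : nat) (x : R) :
  f_tail t x = exp (- x) * Series (exp_tail_term t x).
Proof. reflexivity. Qed.

Section ExpTail.

Variables (t : nat) (x : R).
Hypothesis x_ge0 : 0 <= x.

Lemma exp_tail_term_ge0 (n : nat) : 0 <= exp_tail_term t x n.
Proof.
  unfold exp_tail_term, Rdiv.
  apply Rmult_le_pos; [apply pow_le, x_ge0 |].
  apply Rlt_le, Rinv_0_lt_compat, INR_fact_lt_0.
Qed.

Lemma ex_series_exp_tail_term : ex_series (exp_tail_term t x).
Proof.
  assert (Hexp : ex_series (fun n => x ^ n / INR (Factorial.fact n))).
  { exists (exp x); eapply is_series_ext; [| apply (is_exp_Reals x)].
    intro n; rewrite pow_n_pow; reflexivity. }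
  apply (ex_series_incr_n _ t) in Hexp.
  eapply ex_series_ext; [| exact Hexp].
  intro n; unfold exp_tail_term; rewrite Nat.add_comm; reflexivity.
Qed.

Lemma exp_tail_term_S (n : nat) :
  exp_tail_term t x (S n) = exp_tail_term t x n * (x / INR (S n + t)).
Proof.
  unfold exp_tail_term; simpl (S n + t)%nat.
  rewrite fact_simpl, mult_INR; simpl pow.
  field; repeat split; first [apply INR_fact_neq_0 | apply not_0_INR; lia].
Qed.

Lemma exp_tail_term_ge_first (n : nat) :
  INR (n + t) <= x -> exp_tail_term t x 0 <= exp_tail_term t x n.
Proof.
  induction n as [| n IH]; intro Hn; [lra |].
  assert (Hpos : 0 < INR (S n + t)) by (apply lt_0_INR; lia).
  assert (Hratio : 1 <= x / INR (S n + t)).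
  { apply Rmult_le_reg_r with (INR (S n + t)); [exact Hpos |].
    unfold Rdiv; rewrite Rmult_assoc, Rinv_l by lra; lra. }
  assert (Hprev : exp_tail_term t x 0 <= exp_tail_term t x n).
  { apply IH, Rle_trans with (INR (S n + t)); [apply le_INR; lia | exact Hn]. }
  pose proof (exp_tail_term_ge0 0).
  rewrite exp_tail_term_S; nra.
Qed.

Lemma Series_exp_tail_term_ge (N : nat) :
  INR (N + t) <= x -> INR (S N) * exp_tail_term t x 0 <= Series (exp_tail_term t x).
Proof.
  intro HN.
  apply Rle_trans with (sum_f_R0 (exp_tail_term t x) N).
  - induction N as [| N IH]; simpl sum_f_R0; [simpl INR; lra |].
    rewrite S_INR.
    assert (Hlast : exp_tail_term t x 0 <= exp_tail_term t x (S N))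
      by (apply exp_tail_term_ge_first, HN).
    assert (IH' : INR (S N) * exp_tail_term t x 0 <= sum_f_R0 (exp_tail_term t x) N).
    { apply IH, Rle_trans with (INR (S N + t)); [apply le_INR; lia | exact HN]. }
    lra.
  - apply Series_ge_sum_f_R0; [apply exp_tail_term_ge0 | apply ex_series_exp_tail_term].
Qed.

End ExpTail.

Lemma exp_tail_term_0 (t : nat) (x : R) :
  exp_tail_term t x 0 = x ^ t / INR (Factorial.fact t).
Proof. reflexivity. Qed.

Lemma Series_exp_tail_term_gt (m r : nat) (x : R) :
  (1 <= m)%nat -> (1 <= r)%nat -> INR r * INR m <= x ->
  (INR r - 1) * INR m * exp_tail_term m x 0 < Series (exp_tail_term m x).
Proof.
  intros Hm Hr Hx.
  assert (Hm0 : 1 <= INR m) by (apply (le_INR 1); exact Hm).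
  assert (Hr0 : 1 <= INR r) by (apply (le_INR 1); exact Hr).
  assert (Hx0 : 0 < x) by nra.
  assert (Hc : 0 < exp_tail_term m x 0).
  { rewrite exp_tail_term_0; unfold Rdiv.
    apply Rmult_lt_0_compat; [apply pow_lt, Hx0 | apply Rinv_0_lt_compat, INR_fact_lt_0]. }
  (* The [(r-1) m + 1] terms of indices [m, ..., r m] all dominate the first one. *)
  pose proof (Series_exp_tail_term_ge m x (Rlt_le _ _ Hx0) ((r - 1) * m)) as Hsum.
  rewrite S_INR, plus_INR, !mult_INR, minus_INR, INR_1 in Hsum by lia.
  specialize (Hsum ltac:(nra)); nra.
Qed.

Lemma f_tail_ratio (p : nat) (x : R) :
  exp (- x) * x ^ S p / (f_tail (S p) x * INR (Factorial.fact p))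
  = INR (S p) * exp_tail_term (S p) x 0 / Series (exp_tail_term (S p) x).
Proof.
  rewrite f_tail_Series, exp_tail_term_0, fact_simpl, mult_INR.
  pose proof (exp_pos (- x)); pose proof (INR_fact_lt_0 p).
  assert (INR (S p) <> 0) by (apply not_0_INR; lia).
  destruct (Req_dec (Series (exp_tail_term (S p) x)) 0) as [-> | Htail].
  - unfold Rdiv; rewrite Rmult_0_r, Rmult_0_l, !Rinv_0, !Rmult_0_r; reflexivity.
  - field; repeat split; lra.
Qed.

Lemma Rdiv_lt_inv (a b q : R) : 0 < q -> 0 <= a -> q * a < b -> a / b < 1 / q.
Proof.
  intros Hq Ha Hb.
  assert (Hb0 : 0 < b) by nra.
  apply Rmult_lt_reg_r with (b * q); [nra |].
  replace (a / b * (b * q)) with (q * a) by (field; lra).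
  replace (1 / q * (b * q)) with b by (field; lra).
  exact Hb.
Qed.

Theorem lemma49 (k r : nat) (x : R) :
  (2 <= k)%nat -> (2 <= r)%nat -> INR r * (INR k - 1) <= x ->
  exp (- x) * x ^ (k - 1)%nat / (f_tail (k - 1)%nat x * INR (Factorial.fact (k - 2)%nat))
  < 1 / (INR r - 1).
Proof.
  intros Hk Hr Hx.
  destruct k as [| [| p]]; try lia.
  replace (S (S p) - 1)%nat with (S p) by lia.
  replace (S (S p) - 2)%nat with p by lia.
  replace (INR (S (S p)) - 1) with (INR (S p)) in Hx by (rewrite (S_INR (S p)); ring).
  rewrite f_tail_ratio.
  assert (Hr1 : 1 <= INR r - 1) by (apply (le_INR 2) in Hr; simpl in Hr; lra).
  apply Rdiv_lt_inv; [lra | | ].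
  - apply Rmult_le_pos; [apply pos_INR | apply exp_tail_term_ge0].
    apply Rle_trans with (INR r * INR (S p)); [| exact Hx].
    apply Rmult_le_pos; apply pos_INR.
  - rewrite <- Rmult_assoc; apply Series_exp_tail_term_gt; lia || exact Hx.
Qed.
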